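(* Let $\ell$ and $m$ be positive integers with $\ell\le m$, let $G$ be a group written additively, and let $\mathbf{a}=(a_1,\dots,a_m)$ be a sequence of elements of $G$. Then at least one of the following holds: (1) $|\Sigma^{\ell}(\mathbf{a})|\ge\min(p(G),\ m-\ell+1)$; (2) there exists $i\in[1,m]$ such that $\ell a_i\in\Sigma^{\ell}(\mathbf{a})$.
   Context: $p(G)$ is the order of the smallest nontrivial subgroup of $G$, or $\infty$ if no such subgroup exists. $\ell a_i$ denotes $a_i+\cdots+a_i$ ($\ell$ times). $\Sigma^{\ell}(\mathbf{a})$ is the set of all elements $a_{i_1}+\cdots+a_{i_\ell}$ with $i_1,\dots,i_\ell\in[1,m]$ pairwise distinct, taken in any order. *)

From Stdlib Require Import Arith List ClassicalEpsilon.
Import ListNotations.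

Record is_group {G : Type} (add : G -> G -> G) (zero : G) (opp : G -> G) : Prop :=
  { grp_assoc : forall x y z, add x (add y z) = add (add x y) z;
    grp_zero_l : forall x, add zero x = x;
    grp_opp_l : forall x, add (opp x) x = zero }.

Section Defs.
Context {G : Type} (add : G -> G -> G) (zero : G) (opp : G -> G).

Definition is_subgroup (H : G -> Prop) : Prop :=
  H zero /\ (forall x y, H x -> H y -> H (add x y)) /\ (forall x, H x -> H (opp x)).

Definition has_card (H : G -> Prop) (n : nat) : Prop :=
  exists xs : list G, NoDup xs /\ length xs = n /\ (forall x, H x <-> In x xs).

Definition has_nontriv_subgroup_of_order (n : nat) : Prop :=
  exists H : G -> Prop, is_subgroup H /\ (exists x, H x /\ x <> zero) /\ has_card H n.

(* specification of p(G): Some p = the order of the smallest nontrivial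
   subgroup, None = infinity (no nontrivial finite subgroup exists) *)
Definition is_pG (p : option nat) : Prop :=
  match p with
  | None => ~ exists n, has_nontriv_subgroup_of_order n
  | Some q => has_nontriv_subgroup_of_order q /\
              forall n, has_nontriv_subgroup_of_order n -> q <= n
  end.

Definition pG : option nat := epsilon (inhabits None) is_pG.

Definition min_pG (k : nat) : nat :=
  match pG with Some q => Nat.min q k | None => k end.

Definition gsum (xs : list G) : G := fold_right add zero xs.

Definition gmul (l : nat) (x : G) : G := gsum (repeat x l).

(* Sigma^l(a) for a = (a_0, ..., a_{m-1}) (0-based indices): sums of l terms
   with pairwise distinct indices, taken in any order *)
Definition Sigma (m l : nat) (a : nat -> G) (x : G) : Prop :=
  exists idx : list nat, length idx = l /\ NoDup idx /\
    (forall i, In i idx -> i < m) /\ x = gsum (map a idx).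

Definition card_ge (S : G -> Prop) (k : nat) : Prop :=
  exists xs : list G, NoDup xs /\ length xs = k /\ (forall x, In x xs -> S x).

End Defs.

(* If some value a_i is taken more than l times, then l a_i is itself a sum of l
   terms with distinct indices.  Otherwise we induct on l: split off a block I
   of indices carrying pairwise distinct values, of size min(#values, m - l),
   so that the remaining indices take every value at most l - 1 times.  Then
   Sigma^l(a) contains Sigma^(l-1)(rest) + {a_i : i in I}, and Kemperman's
   theorem |X + Y| >= min(p(G), |X| + |Y| - 1) carries the bound through.

   Kemperman's theorem is proved with the e-transform.  A collision
   x1 + y1 = x2 + y2 with x1 <> x2 gives e = -x1 + x2 <> 0, and both pairs
   (X u (X + e), Y n (-e + Y)) and (X n (X - e), Y u (e + Y)) have a smaller
   sumset than (X, Y); their sizes add up to 2(|X| + |Y|), so one of them does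
   not decrease |X| + |Y|.  The first one shrinks Y unless e + Y = Y, and then
   e generates a subgroup of order at most |Y|. *)

From Pilot Require Import Defs.
From Stdlib Require Import Arith List Lia Classical ClassicalEpsilon Wf_nat FinFun.
Import ListNotations.

Section ClassicalLists.
Context {A : Type}.

Definition eq_dec_classic (x y : A) : {x = y} + {x <> y} :=
  excluded_middle_informative (x = y).

Definition mem (x : A) (l : list A) : bool :=
  if excluded_middle_informative (In x l) then true else false.

Lemma mem_spec x l : mem x l = true <-> In x l.
Proof.
  unfold mem; destruct (excluded_middle_informative (In x l)); split; congruence || tauto.
Qed.

Definition card (l : list A) : nat := length (nodup eq_dec_classic l).

Lemma card_incl l l' : incl l l' -> card l <= card l'.
Proof.
  intro H. apply NoDup_incl_length; [apply NoDup_nodup|].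
  apply nodup_incl. intros x Hx. apply nodup_In in Hx. now apply H.
Qed.

Lemma NoDup_length_le_card L l : NoDup L -> incl L l -> length L <= card l.
Proof. intros HL Hincl. apply NoDup_incl_length; [exact HL|]. now apply nodup_incl. Qed.

Definition diff (l I : list A) : list A := filter (fun x => negb (mem x I)) l.

Lemma In_diff x l I : In x (diff l I) <-> In x l /\ ~ In x I.
Proof.
  unfold diff. rewrite filter_In. pose proof (mem_spec x I).
  destruct (mem x I); simpl; intuition discriminate.
Qed.

Lemma length_diff l I : NoDup l -> NoDup I -> incl I l ->
  length (diff l I) + length I = length l.
Proof.
  intros Hl HI Hincl. rewrite <- (filter_length (fun x => mem x I) l).
  enough (length (filter (fun x => mem x I) l) = length I) by (unfold diff; lia).
  apply Nat.le_antisymm; apply NoDup_incl_length.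
  - now apply NoDup_filter.
  - intros x Hx. apply filter_In in Hx. now apply mem_spec.
  - exact HI.
  - intros x Hx. apply filter_In. split; [now apply Hincl | now apply mem_spec].
Qed.

Definition union_image (f : A -> A) (X : list A) : list A :=
  X ++ map f (filter (fun x => negb (mem (f x) X)) X).

Definition inter_preimage (f : A -> A) (X : list A) : list A :=
  filter (fun x => mem (f x) X) X.

Lemma length_union_image_inter_preimage f X :
  length (union_image f X) + length (inter_preimage f X) = 2 * length X.
Proof.
  unfold union_image, inter_preimage. rewrite length_app, length_map.
  pose proof (filter_length (fun x => mem (f x) X) X). lia.
Qed.

Lemma incl_union_image f X : incl X (union_image f X).
Proof. intros x Hx. now apply in_or_app; left. Qed.

Lemma In_union_image f X z :
  In z (union_image f X) -> In z X \/ exists x, In x X /\ z = f x.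
Proof.
  intro Hz. apply in_app_or in Hz as [Hz | Hz]; [now left|right].
  apply in_map_iff in Hz as [x [<- Hx]]. apply filter_In in Hx. now exists x.
Qed.

Lemma NoDup_union_image f X : Injective f -> NoDup X -> NoDup (union_image f X).
Proof.
  intros Hf HX. apply NoDup_app; [exact HX| |].
  - now apply Injective_map_NoDup, NoDup_filter.
  - intros z Hz Hz'. apply in_map_iff in Hz' as [x [<- Hx]].
    apply filter_In in Hx as [_ Hx]. apply mem_spec in Hz. now rewrite Hz in Hx.
Qed.

Lemma In_inter_preimage f X x : In x (inter_preimage f X) <-> In x X /\ In (f x) X.
Proof. unfold inter_preimage. now rewrite filter_In, mem_spec. Qed.

Lemma inter_preimage_full f X :
  length (inter_preimage f X) = length X -> forall x, In x X -> In (f x) X.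
Proof.
  intros Hfull x Hx. apply filter_length_forallb in Hfull.
  apply mem_spec. now apply forallb_forall with (x := x) in Hfull.
Qed.

Lemma In_firstn n (l : list A) x : In x (firstn n l) -> In x l.
Proof. rewrite <- (firstn_skipn n l) at 2. intro Hx. now apply in_or_app; left. Qed.

Lemma NoDup_firstn n (l : list A) : NoDup l -> NoDup (firstn n l).
Proof. rewrite <- (firstn_skipn n l) at 1. apply NoDup_app_remove_r. Qed.

Lemma pigeonhole_nat (f : nat -> A) (Y : list A) :
  (forall k, In (f k) Y) -> exists i j, i < j <= length Y /\ f i = f j.
Proof.
  intro HfY. apply NNPP. intro Hinj.
  assert (Hnd : NoDup (map f (seq 0 (S (length Y))))).
  { apply Injective_map_NoDup_in; [|apply seq_NoDup].
    intros i j Hi Hj Hij. apply in_seq in Hi, Hj.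
    destruct (lt_eq_lt_dec i j) as [[Hlt | Heq] | Hlt]; [exfalso | exact Heq | exfalso];
      apply Hinj; [exists i, j | exists j, i]; split; auto; lia. }
  apply NoDup_incl_length with (l' := Y) in Hnd.
  - rewrite length_map, length_seq in Hnd. lia.
  - intros y Hy. apply in_map_iff in Hy as [k [<- _]]. apply HfY.
Qed.

Lemma transversal {B : Type} (f : B -> A) (l : list B) :
  exists T, incl T l /\ NoDup (map f T) /\
    forall i, In i l -> exists t, In t T /\ f t = f i.
Proof.
  induction l as [|i l [T (HTl & HTinj & HTcover)]].
  - exists []. repeat split; [intros x [] | constructor | intros i []].
  - destruct (classic (exists t, In t T /\ f t = f i)) as [Hrep | Hnew].
    + exists T. split; [now apply incl_tl|split; [exact HTinj|]].
      intros j [<- | Hj]; auto.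
    + exists (i :: T). split; [apply incl_cons; [now left | now apply incl_tl]|split].
      * constructor; [|exact HTinj]. intro Hin. apply in_map_iff in Hin as [t [Ht1 Ht2]].
        apply Hnew. now exists t.
      * intros j [<- | Hj]; [exists i; split; [left|]; reflexivity|].
        destruct (HTcover j Hj) as [t [Ht Hft]]. exists t. split; [now right | exact Hft].
Qed.

End ClassicalLists.

Section Group.
Context {G : Type} (add : G -> G -> G) (zero : G) (opp : G -> G)
  (hG : is_group add zero opp).
Local Infix "+" := add.
Local Notation subgroup_of_order := (has_nontriv_subgroup_of_order add zero opp).
Local Notation gsum := (gsum add zero).
Local Notation gmul := (gmul add zero).

Let add_assoc x y z : x + (y + z) = (x + y) + z := grp_assoc _ _ _ hG x y z.
Let add_zero_l x : zero + x = x := grp_zero_l _ _ _ hG x.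
Let add_opp_l x : opp x + x = zero := grp_opp_l _ _ _ hG x.

Lemma add_opp_r x : x + opp x = zero.
Proof.
  rewrite <- (add_zero_l (x + opp x)), <- (add_opp_l (opp x)) at 1.
  rewrite <- add_assoc, (add_assoc (opp x) x), add_opp_l, add_zero_l. apply add_opp_l.
Qed.

Lemma add_zero_r x : x + zero = x.
Proof. now rewrite <- (add_opp_l x), add_assoc, add_opp_r, add_zero_l. Qed.

Lemma add_cancel_l x : Injective (add x).
Proof.
  intros y z H. rewrite <- (add_zero_l y), <- (add_zero_l z), <- (add_opp_l x).
  now rewrite <- !add_assoc, H.
Qed.

Lemma add_cancel_r x : Injective (fun y => y + x).
Proof.
  intros y z H. rewrite <- (add_zero_r y), <- (add_zero_r z), <- (add_opp_r x).
  now rewrite !add_assoc, H.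
Qed.

Lemma opp_unique x y : x + y = zero -> y = opp x.
Proof. intro H. apply (add_cancel_l x). now rewrite H, add_opp_r. Qed.

Lemma gsum_app l1 l2 : gsum (l1 ++ l2) = gsum l1 + gsum l2.
Proof.
  induction l1 as [|x l1 IH]; simpl.
  - now rewrite add_zero_l.
  - unfold Defs.gsum in *. now rewrite IH, add_assoc.
Qed.

Lemma gmul_add i j e : gmul (i + j) e = gmul i e + gmul j e.
Proof. unfold Defs.gmul. now rewrite repeat_app, gsum_app. Qed.

Lemma gmul_period_mul d i e : gmul d e = zero -> gmul (d * i) e = zero.
Proof.
  intro Hd. induction i as [|i IH]; [now rewrite Nat.mul_0_r|].
  now rewrite Nat.mul_succ_r, gmul_add, IH, Hd, add_zero_l.
Qed.

Lemma gmul_period_mod d k e : 0 < d -> gmul d e = zero -> gmul k e = gmul (k mod d) e.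
Proof.
  intros Hd Hde. rewrite (Nat.div_mod_eq k d) at 1.
  now rewrite gmul_add, gmul_period_mul, add_zero_l.
Qed.

Lemma cyclic_subgroup e d : e <> zero -> 0 < d -> gmul d e = zero ->
  exists n, subgroup_of_order n /\ n <= d.
Proof.
  intros He Hd Hde.
  set (L := nodup eq_dec_classic (map (fun k => gmul k e) (seq 0 d))).
  exists (length L). split.
  - exists (fun x => exists k, x = gmul k e). split; [|split].
    + split; [|split].
      * now exists 0.
      * intros x y [i ->] [j ->]. exists (i + j)%nat. now rewrite gmul_add.
      * intros x [k ->]. exists ((d - 1) * k). symmetry. apply opp_unique.
        rewrite <- gmul_add. replace (k + (d - 1) * k)%nat with (d * k)%nat by nia.
        now apply gmul_period_mul.
    + exists e. split; [|exact He]. exists 1. symmetry. apply add_zero_r.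
    + exists L. split; [apply NoDup_nodup|split; [reflexivity|]].
      intro x. unfold L. rewrite nodup_In, in_map_iff. split.
      * intros [k ->]. exists (k mod d). split; [symmetry; now apply gmul_period_mod|].
        apply in_seq. pose proof (Nat.mod_upper_bound k d). lia.
      * intros [k [<- _]]. now exists k.
  - rewrite <- (length_seq d 0), <- (length_map (fun k => gmul k e)).
    apply NoDup_incl_length; [apply NoDup_nodup|]. intros x. apply nodup_In.
Qed.

Lemma translation_period e Y y0 : In y0 Y -> (forall y, In y Y -> In (e + y) Y) ->
  exists d, 0 < d <= length Y /\ gmul d e = zero.
Proof.
  intros Hy0 Hstable.
  assert (Horbit : forall k, In (gmul k e + y0) Y).
  { induction k as [|k IH]; [now rewrite add_zero_l|].
    change (gmul (S k) e) with (e + gmul k e). rewrite <- add_assoc. auto. }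
  destruct (pigeonhole_nat _ Y Horbit) as [i [j [Hij Heq]]].
  exists (j - i). split; [lia|].
  apply add_cancel_r in Heq.
  replace j with (j - i + i)%nat in Heq by lia. rewrite gmul_add in Heq.
  rewrite <- (add_zero_l (gmul i e)) in Heq at 1. apply add_cancel_r in Heq. auto.
Qed.

Lemma subgroup_of_stable_translation e Y : e <> zero -> Y <> [] ->
  (forall y, In y Y -> In (e + y) Y) -> exists n, subgroup_of_order n /\ n <= length Y.
Proof.
  intros He HY0 Hstable. destruct Y as [|y0 Y]; [congruence|].
  destruct (translation_period e (y0 :: Y) y0 (in_eq _ _) Hstable) as [d [Hd Hde]].
  destruct (cyclic_subgroup e d He ltac:(lia) Hde) as [n [Hn Hnd]].
  exists n. split; [exact Hn | lia].
Qed.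

Lemma subgroup_order_pos n : subgroup_of_order n -> 0 < n.
Proof.
  intros [H [_ [[x [Hx _]] [xs [_ [<- HHxs]]]]]]. apply HHxs in Hx.
  destruct xs; [destruct Hx | simpl; lia].
Qed.

(* [ge_min_p c k] says c >= min(p(G), k). *)
Definition ge_min_p (c k : nat) : Prop :=
  (exists n, subgroup_of_order n /\ n <= c) \/ k <= c.

Lemma ge_min_p_mono c k c' k' : ge_min_p c k -> c <= c' -> k' <= k -> ge_min_p c' k'.
Proof.
  intros [[n [Hn Hnc]] | Hkc] Hc Hk; [left; exists n; split | right]; auto; lia.
Qed.

Lemma ge_min_p_pos c k : ge_min_p c k -> 0 < k -> 0 < c.
Proof. intros [[n [Hn Hnc]] | Hkc] Hk; [pose proof (subgroup_order_pos n Hn)|]; lia. Qed.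

Lemma pG_exists : exists p, is_pG add zero opp p.
Proof.
  destruct (classic (exists n, subgroup_of_order n)) as [Hsub | Hnone].
  - destruct (dec_inh_nat_subset_has_unique_least_element _ (fun n => classic _) Hsub)
      as [q [[Hq Hmin] _]].
    exists (Some q). split; [exact Hq | exact Hmin].
  - now exists None.
Qed.

Lemma min_pG_le c k : ge_min_p c k -> min_pG add zero opp k <= c.
Proof.
  pose proof (epsilon_spec (inhabits None) _ pG_exists) as Hp.
  unfold min_pG. fold (pG add zero opp) in *.
  destruct (pG add zero opp) as [q|]; simpl in Hp; intros [[n [Hn Hnc]] | Hkc].
  - pose proof (proj2 Hp n Hn). lia.
  - lia.
  - exfalso. apply Hp. now exists n.
  - exact Hkc.
Qed.

Definition sumset (X Y : list G) : list G := flat_map (fun x => map (add x) Y) X.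

Lemma In_sumset z X Y : In z (sumset X Y) <-> exists x y, In x X /\ In y Y /\ z = x + y.
Proof.
  unfold sumset. rewrite in_flat_map. split.
  - intros [x [Hx Hz]]. apply in_map_iff in Hz as [y [<- Hy]]. now exists x, y.
  - intros [x [y (Hx & Hy & ->)]]. exists x. split; [exact Hx | now apply in_map].
Qed.

Lemma card_sumset_ge_l X Y y : In y Y -> NoDup X -> length X <= card (sumset X Y).
Proof.
  intros Hy HX. rewrite <- (length_map (fun x => x + y) X).
  apply NoDup_length_le_card; [now apply Injective_map_NoDup; [apply add_cancel_r|]|].
  intros z Hz. apply in_map_iff in Hz as [x [<- Hx]]. apply In_sumset. now exists x, y.
Qed.

Lemma card_sumset_ge_r X Y x : In x X -> NoDup Y -> length Y <= card (sumset X Y).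
Proof.
  intros Hx HY. rewrite <- (length_map (add x) Y).
  apply NoDup_length_le_card; [now apply Injective_map_NoDup; [apply add_cancel_l|]|].
  intros z Hz. apply in_map_iff in Hz as [y [<- Hy]]. apply In_sumset. now exists x, y.
Qed.

Lemma card_sumset_no_collision X Y : NoDup X -> NoDup Y -> X <> [] -> Y <> [] ->
  (forall x1 x2 y1 y2, In x1 X -> In x2 X -> In y1 Y -> In y2 Y ->
     x1 + y1 = x2 + y2 -> x1 = x2) ->
  length X + length Y - 1 <= card (sumset X Y).
Proof.
  destruct X as [|x0 X]; [congruence|]. destruct Y as [|y0 Y]; [congruence|].
  intros HX HY _ _ Hfree. apply NoDup_cons_iff in HX as [Hx0 HX].
  set (L := map (add x0) (y0 :: Y) ++ map (fun x => x + y0) X).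
  enough (length L <= card (sumset (x0 :: X) (y0 :: Y))) as HL.
  { unfold L in HL. rewrite length_app, !length_map in HL. simpl in *. lia. }
  apply NoDup_length_le_card.
  - apply NoDup_app.
    + apply Injective_map_NoDup; [apply add_cancel_l | exact HY].
    + apply Injective_map_NoDup; [apply add_cancel_r | exact HX].
    + intros z Hz Hz'. apply in_map_iff in Hz as [y [<- Hy]].
      apply in_map_iff in Hz' as [x [Heq Hx]].
      apply Hx0. rewrite (Hfree x0 x y y0); simpl; auto.
  - intros z Hz. apply In_sumset. apply in_app_or in Hz as [Hz | Hz];
      apply in_map_iff in Hz as [w [<- Hw]]; [exists x0, w | exists w, y0]; simpl; auto.
Qed.

Lemma sumset_union_inter_incl X Y e :
  incl (sumset (union_image (fun x => x + e) X) (inter_preimage (add e) Y)) (sumset X Y).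
Proof.
  intros z Hz. apply In_sumset in Hz as [x [y (Hx & Hy & ->)]].
  apply In_inter_preimage in Hy as [Hy Hey]. apply In_sumset.
  destruct (In_union_image _ _ _ Hx) as [Hx' | [x' [Hx' ->]]].
  - now exists x, y.
  - exists x', (e + y). now rewrite add_assoc.
Qed.

Lemma sumset_inter_union_incl X Y e :
  incl (sumset (inter_preimage (fun x => x + e) X) (union_image (add e) Y)) (sumset X Y).
Proof.
  intros z Hz. apply In_sumset in Hz as [x [y (Hx & Hy & ->)]].
  apply In_inter_preimage in Hx as [Hx Hxe]. apply In_sumset.
  destruct (In_union_image _ _ _ Hy) as [Hy' | [y' [Hy' ->]]].
  - now exists x, y.
  - exists (x + e), y'. now rewrite add_assoc.
Qed.

Lemma collision_translation X Y x1 x2 y1 y2 :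
  In x1 X -> In x2 X -> In y1 Y -> In y2 Y -> x1 <> x2 -> x1 + y1 = x2 + y2 ->
  exists e, e <> zero /\ In x1 (inter_preimage (fun x => x + e) X) /\
    In y2 (inter_preimage (add e) Y).
Proof.
  intros Hx1 Hx2 Hy1 Hy2 Hne Hcoll. set (e := opp x1 + x2).
  assert (Hx1e : x1 + e = x2) by (unfold e; now rewrite add_assoc, add_opp_r, add_zero_l).
  assert (Hey2 : e + y2 = y1) by (apply (add_cancel_l x1); now rewrite add_assoc, Hx1e).
  exists e. split; [|split; apply In_inter_preimage].
  - intro He. apply Hne. now rewrite <- Hx1e, He, add_zero_r.
  - now rewrite Hx1e.
  - now rewrite Hey2.
Qed.

Lemma kemperman_ind N : forall k X Y,
  2 * card (sumset X Y) - (length X + length Y) <= N -> length Y <= k ->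
  NoDup X -> NoDup Y -> X <> [] -> Y <> [] ->
  ge_min_p (card (sumset X Y)) (length X + length Y - 1).
Proof.
  induction N as [N IHN] using (well_founded_induction lt_wf).
  induction k as [|k IHk]; intros X Y HN Hk HX HY HX0 HY0.
  { destruct Y; [congruence | simpl in Hk; lia]. }
  destruct (classic (exists x1 x2 y1 y2, In x1 X /\ In x2 X /\ In y1 Y /\ In y2 Y /\
                       x1 <> x2 /\ x1 + y1 = x2 + y2))
    as [[x1 [x2 [y1 [y2 (Hx1 & Hx2 & Hy1 & Hy2 & Hne & Hcoll)]]]] | Hfree].
  2: { right. apply card_sumset_no_collision; auto.
       intros x1 x2 y1 y2 Hx1 Hx2 Hy1 Hy2 Heq. apply NNPP. intro Hne.
       apply Hfree. now exists x1, x2, y1, y2. }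
  destruct (collision_translation X Y x1 x2 y1 y2) as [e (He & Hx1X2 & Hy2Y1)]; auto.
  pose proof (length_union_image_inter_preimage (fun x => x + e) X).
  pose proof (length_union_image_inter_preimage (add e) Y).
  pose proof (card_incl _ _ (sumset_union_inter_incl X Y e)).
  pose proof (card_incl _ _ (sumset_inter_union_incl X Y e)).
  pose proof (card_sumset_ge_l X Y y2 Hy2 HX).
  pose proof (card_sumset_ge_r X Y x1 Hx1 HY).
  set (X1 := union_image (fun x => x + e) X) in *. set (Y1 := inter_preimage (add e) Y) in *.
  set (X2 := inter_preimage (fun x => x + e) X) in *. set (Y2 := union_image (add e) Y) in *.
  destruct (le_lt_dec (length X + length Y) (length X1 + length Y1)) as [Hgrow | Hgrow].
  - destruct (Nat.eq_dec (length Y1) (length Y)) as [Hstable | Hshrink].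
    + left. destruct (subgroup_of_stable_translation e Y He HY0) as [n [Hn HnY]].
      { now apply inter_preimage_full. }
      exists n. split; [exact Hn | lia].
    + assert (length Y1 <= length Y) by apply filter_length_le.
      pose proof (card_sumset_ge_l X1 Y1 y2 Hy2Y1).
      apply ge_min_p_mono with (card (sumset X1 Y1)) (length X1 + length Y1 - 1);
        [apply IHk | lia | lia]; try lia.
      * apply NoDup_union_image; [apply add_cancel_r | exact HX].
      * now apply NoDup_filter.
      * intros HX1. apply HX0, incl_l_nil. rewrite <- HX1. apply incl_union_image.
      * now intros HY1; rewrite HY1 in Hy2Y1.
  - assert (HX2 : NoDup X2) by now apply NoDup_filter.
    assert (HY2 : NoDup Y2) by (apply NoDup_union_image; [apply add_cancel_l | exact HY]).
    pose proof (card_sumset_ge_l X2 Y2 y2 (incl_union_image _ _ _ Hy2) HX2).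
    pose proof (card_sumset_ge_r X2 Y2 x1 Hx1X2 HY2).
    apply ge_min_p_mono with (card (sumset X2 Y2)) (length X2 + length Y2 - 1);
      [apply (IHN (2 * card (sumset X2 Y2) - (length X2 + length Y2))) with (k := length Y2)
      | lia | lia]; auto; try lia.
    + now intros HX2'; rewrite HX2' in Hx1X2.
    + intros HY2'. apply HY0, incl_l_nil. rewrite <- HY2'. apply incl_union_image.
Qed.

Theorem kemperman X Y : NoDup X -> NoDup Y -> X <> [] -> Y <> [] ->
  ge_min_p (card (sumset X Y)) (length X + length Y - 1).
Proof. intros. eapply kemperman_ind; eauto. Qed.

Section Sigma.
Variable a : nat -> G.

Definition Sigma_on (idx : list nat) (l : nat) (x : G) : Prop :=
  exists J, length J = l /\ NoDup J /\ incl J idx /\ x = gsum (map a J).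

Definition multiplicity_le (idx : list nat) (l : nat) : Prop :=
  forall J i, NoDup J -> incl J idx -> (forall j, In j J -> a j = a i) -> length J <= l.

Lemma Sigma_on_add_value idx I l x i : incl I idx -> In i I ->
  Sigma_on (diff idx I) l x -> Sigma_on idx (S l) (x + a i).
Proof.
  intros HIidx Hi [J (HJl & HJ & HJrest & ->)]. exists (J ++ [i]). split; [|split; [|split]].
  - rewrite length_app. simpl. lia.
  - apply NoDup_app; [exact HJ | apply NoDup_cons; [intros [] | constructor] |].
    intros j Hj [<- | []]. now apply HJrest, In_diff in Hj.
  - intros j Hj. apply in_app_or in Hj as [Hj | [<- | []]].
    + now apply HJrest, In_diff in Hj.
    + now apply HIidx.
  - rewrite map_app, gsum_app. simpl. now rewrite add_zero_r.
Qed.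

(* The block takes min(#values, |idx| - l) indices with distinct values: if it
   meets every value, each multiplicity drops by one; otherwise only l indices
   are left. *)
Lemma distinct_values_block idx l : NoDup idx -> S l <= length idx ->
  multiplicity_le idx (S l) ->
  exists I, I <> [] /\ incl I idx /\ NoDup (map a I) /\ l + length I <= length idx /\
    multiplicity_le (diff idx I) l.
Proof.
  intros Hidx Hl Hmult.
  destruct (transversal a idx) as [T (HTidx & HTinj & HTcover)].
  assert (HT : NoDup T) by exact (NoDup_map_inv _ _ HTinj).
  assert (HT0 : 0 < length T).
  { destruct idx as [|i0 idx]; [simpl in Hl; lia|].
    destruct (HTcover i0 (in_eq _ _)) as [t [Ht _]]. destruct T; [destruct Ht | simpl; lia]. }
  set (k := Nat.min (length T) (length idx - l)).
  set (I := firstn k T).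
  assert (HIk : length I = k) by (unfold I; rewrite length_firstn; lia).
  assert (HIidx : incl I idx) by (intros i Hi; now apply HTidx, (In_firstn k)).
  assert (HI : NoDup I) by now apply NoDup_firstn.
  pose proof (length_diff idx I Hidx HI HIidx).
  exists I. split; [|split; [exact HIidx | split; [|split]]].
  - intros HI0. rewrite HI0 in HIk. simpl in HIk. lia.
  - unfold I. rewrite <- firstn_map. now apply NoDup_firstn.
  - lia.
  - intros J i HJ HJrest HJconst.
    destruct (le_lt_dec (length T) (length idx - l)) as [Hall | Hfew].
    + destruct J as [|j0 J]; [simpl; lia|].
      assert (Hj0 : In j0 idx /\ ~ In j0 I) by now apply In_diff, HJrest; left.
      destruct (HTcover j0 (proj1 Hj0)) as [t [Ht Hat]].
      assert (HtI : In t I) by (unfold I; rewrite firstn_all2; [exact Ht | lia]).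
      assert (HtJ : ~ In t (j0 :: J)) by (intro HtJ; now apply HJrest, In_diff in HtJ).
      enough (length (t :: j0 :: J) <= S l) by (simpl in *; lia).
      apply Hmult with i.
      * now constructor.
      * intros x [<- | Hx]; [now apply HTidx | now apply HJrest, In_diff in Hx].
      * intros j [<- | Hj]; [rewrite Hat|]; apply HJconst; [left|]; auto.
    + pose proof (NoDup_incl_length HJ HJrest). lia.
Qed.

Lemma multiplicity_le_0 idx : multiplicity_le idx 0 -> idx = [].
Proof.
  intro Hmult. destruct idx as [|i idx]; [reflexivity|].
  enough (length [i] <= 0) by (simpl in *; lia).
  apply (Hmult [i] i).
  - repeat constructor. intros [].
  - intros j [<- | []]. now left.
  - now intros j [<- | []].
Qed.

Lemma Sigma_on_lower_bound l : forall idx, NoDup idx -> l <= length idx ->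
  multiplicity_le idx l ->
  exists L, NoDup L /\ (forall x, In x L -> Sigma_on idx l x) /\
    ge_min_p (length L) (length idx - l + 1).
Proof.
  induction l as [|l IH]; intros idx Hidx Hl Hmult.
  - rewrite (multiplicity_le_0 _ Hmult). exists [zero]. split; [repeat constructor; intros []|split].
    + intros x [<- | []]. exists []. repeat split; [constructor | apply incl_refl].
    + now right.
  - destruct (distinct_values_block idx l Hidx Hl Hmult)
      as [I (HI0 & HIidx & HIinj & HIl & Hmult')].
    pose proof (length_diff idx I Hidx (NoDup_map_inv _ _ HIinj) HIidx).
    destruct (IH (diff idx I)) as [L1 (HL1 & HL1Sigma & HL1ge)]; auto.
    { now apply NoDup_filter. }
    { lia. }
    assert (HL10 : L1 <> []).
    { intros HL10. rewrite HL10 in HL1ge. apply ge_min_p_pos in HL1ge; simpl in HL1ge; lia. }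
    assert (HY0 : map a I <> []) by (intro HY0; apply map_eq_nil in HY0; congruence).
    assert (Hi0 : exists i0, In i0 I) by (destruct I as [|i0 I]; [congruence | now exists i0; left]).
    destruct Hi0 as [i0 Hi0].
    pose proof (card_sumset_ge_l L1 (map a I) (a i0) (in_map a I i0 Hi0) HL1).
    pose proof (kemperman L1 (map a I) HL1 HIinj HL10 HY0) as Hkemp.
    rewrite length_map in Hkemp.
    exists (nodup eq_dec_classic (sumset L1 (map a I))). split; [apply NoDup_nodup | split].
    + intros z Hz. apply nodup_In, In_sumset in Hz as [x [y (Hx & Hy & ->)]].
      apply in_map_iff in Hy as [i [<- Hi]].
      apply Sigma_on_add_value with I; auto.
    + change (length (nodup eq_dec_classic (sumset L1 (map a I))))
        with (card (sumset L1 (map a I))).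
      destruct HL1ge as [[n [Hn HnL1]] | HL1len].
      * left. exists n. split; [exact Hn | lia].
      * apply ge_min_p_mono with (1 := Hkemp); lia.
Qed.

Lemma repeated_value_Sigma_on idx l : ~ multiplicity_le idx l ->
  exists i, In i idx /\ Sigma_on idx l (gmul l (a i)).
Proof.
  intro Hrep. apply NNPP. intro Hnone. apply Hrep. intros J i HJ HJidx HJconst.
  apply Nat.nlt_ge. intro HlJ. apply Hnone.
  destruct J as [|j0 J]; [simpl in HlJ; lia|].
  exists j0. split; [now apply HJidx; left|].
  exists (firstn l (j0 :: J)). split; [|split; [|split]].
  - rewrite length_firstn. lia.
  - now apply NoDup_firstn.
  - intros j Hj. now apply HJidx, (In_firstn l).
  - assert (Hconst : Forall (eq (a j0)) (map a (firstn l (j0 :: J)))).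
    { apply Forall_forall. intros x Hx. apply in_map_iff in Hx as [j [<- Hj]].
      apply In_firstn in Hj. rewrite (HJconst j Hj). apply HJconst. now left. }
    unfold Defs.gmul. rewrite (Forall_eq_repeat Hconst), length_map, length_firstn.
    do 3 f_equal. lia.
Qed.

End Sigma.
End Group.

Lemma card_ge_of_NoDup {G : Type} (S : G -> Prop) (L : list G) k :
  NoDup L -> (forall x, In x L -> S x) -> k <= length L -> card_ge S k.
Proof.
  intros HL HLS Hk. exists (firstn k L). split; [|split].
  - now apply NoDup_firstn.
  - rewrite length_firstn. lia.
  - intros x Hx. now apply HLS, (In_firstn k).
Qed.

Lemma Sigma_of_Sigma_on_seq {G : Type} (add : G -> G -> G) (zero : G) a m l x :
  Sigma_on add zero a (seq 0 m) l x -> Sigma add zero m l a x.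
Proof.
  intros [J (HJl & HJ & HJidx & ->)]. exists J. repeat split; auto.
  intros i Hi. apply HJidx, in_seq in Hi. lia.
Qed.

Theorem theorem6p5 (G : Type) (add : G -> G -> G) (zero : G) (opp : G -> G)
  (hG : is_group add zero opp) (l m : nat) (a : nat -> G)
  (hl : 1 <= l) (hlm : l <= m) :
  card_ge (Sigma add zero m l a) (min_pG add zero opp (m - l + 1))
  \/ (exists i, i < m /\ Sigma add zero m l a (gmul add zero l (a i))).
Proof.
  destruct (classic (multiplicity_le a (seq 0 m) l)) as [Hmult | Hrep].
  - left.
    destruct (Sigma_on_lower_bound add zero opp hG a l (seq 0 m) (seq_NoDup m 0))
      as [L (HL & HLSigma & Hge)]; [now rewrite length_seq | exact Hmult |].
    rewrite length_seq in Hge. apply min_pG_le in Hge.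
    apply card_ge_of_NoDup with L; [exact HL | | exact Hge].
    intros x Hx. now apply Sigma_of_Sigma_on_seq, HLSigma.
  - right. destruct (repeated_value_Sigma_on add zero a (seq 0 m) l Hrep) as [i [Hi HSigma]].
    exists i. split; [apply in_seq in Hi; lia|]. now apply Sigma_of_Sigma_on_seq.
Qed.
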